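(* Let $k$ be a field and let $d,m$ be integers with $d$ odd and $5\le d<m-1$. Set $a=(d+1)/2$. Then \[ k[\Delta(d,m)]\cong k[x_1,\dots,x_m]/(I_{a,2,m-1},\; x_1x_m I_{a-1,3,m-2}). \]
   Context: For integers $2\le d<m$, $\Delta(d,m)$ denotes the boundary simplicial complex of the cyclic polytope $C_d(m)$, the convex hull in $\mathbb{R}^d$ of $f(t_1),\dots,f(t_m)$ with $t_1<\dots<t_m$ real and $f(t)=(t,t^2,\dots,t^d)$; vertex $i$ corresponds to $f(t_i)$, and the faces are $\emptyset$ and the vertex sets of proper faces of $C_d(m)$. $k[\Delta]=k[x_1,\dots,x_m]/I_\Delta$ is the Stanley–Reisner ring, $I_\Delta$ being generated by the squarefree monomials $\prod_{t\in W}x_t$ with $W\notin\Delta$. For positive integers $a,p,q$ with $p<q$ and $2a\le q-p+2$, $I_{a,p,q}$ denotes the ideal generated by all monomials $x_{t_1}\cdots x_{t_a}$ with $p\le t_1$, $t_a\le q$ and $t_j+2\le t_{j+1}$ for $1\le j\le a-1$. *)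

From HB Require Import structures.
From mathcomp Require Import all_boot all_order all_algebra.
From mathcomp Require Import reals.
From mathcomp Require Import mpoly.

Set Implicit Arguments.
Unset Strict Implicit.
Unset Printing Implicit Defensive.

Import Order.TTheory GRing.Theory Num.Theory.
Local Open Scope ring_scope.

(* Vertex i (1 <= i <= m) of the paper is the ordinal [i-1 : 'I_m]. *)

(* The moment curve coordinate j (0-based, j < d) of f(t) = (t, t^2, ..., t^d). *)
(* [face_cyc d t W] : W is a face of Delta(d,m), i.e. W is empty, or W is the
   set of vertices lying on a supporting hyperplane  c . x = b  of the point
   set {f(t_i)} (all f(t_i) satisfy c . f(t_i) <= b), and this face is proper
   (W is not the whole vertex set).  Since all f(t_i) are vertices of C_d(m),
   the vertex set of the face C_d(m) ∩ H is exactly {i | f(t_i) ∈ H}. *)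
Definition face_cyc (R : realType) (d m : nat) (t : 'I_m -> R)
    (W : {set 'I_m}) : Prop :=
  W = set0 \/
  (W != setT /\
   exists (c : 'I_d -> R) (b : R),
     (forall i : 'I_m, \sum_(j < d) c j * t i ^+ j.+1 <= b) /\
     (forall i : 'I_m, i \in W <-> \sum_(j < d) c j * t i ^+ j.+1 = b)).

Definition in_gen_ideal (k : fieldType) (m : nat)
    (G : {mpoly k[m]} -> Prop) (p : {mpoly k[m]}) : Prop :=
  exists l : seq ({mpoly k[m]} * {mpoly k[m]}),
    (forall x, x \in l -> G x.2) /\ p = \sum_(x <- l) x.1 * x.2.

Definition monoW (k : fieldType) (m : nat) (W : {set 'I_m}) : {mpoly k[m]} :=
  \prod_(i in W) 'X_i.

Definition SR_gen (k : fieldType) (R : realType) (d m : nat) (t : 'I_m -> R)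
    (g : {mpoly k[m]}) : Prop :=
  exists W : {set 'I_m}, ~ face_cyc d t W /\ g = @monoW k m W.

(* The variable x_s for s in 1..m (1-based, as in the paper). *)
Definition xv (k : fieldType) (m : nat) (s : nat) : {mpoly k[m]} :=
  if (0 < s <= m)%N then \prod_(i : 'I_m | nat_of_ord i == s.-1) 'X_i else 0.

Definition Iapq_gen (k : fieldType) (m a p q : nat) (g : {mpoly k[m]}) : Prop :=
  exists s : seq nat,
    [/\ size s = a,
        (forall j, (j < a)%N -> p <= nth 0 s j <= q)%N,
        (forall j, (j.+1 < a)%N -> nth 0 s j + 2 <= nth 0 s j.+1)%N &
        g = \prod_(x <- s) @xv k m x].

Definition J_gen (k : fieldType) (m a : nat) (g : {mpoly k[m]}) : Prop :=
  @Iapq_gen k m a 2 m.-1 g \/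
  exists h, @Iapq_gen k m a.-1 3 (m - 2) h /\ g = @xv k m 1 * @xv k m m * h.

(* The nonempty faces of Delta(d,m) are the proper subsets [W] of vertices
   that are the zero sets, among the nodes [t_1 < ... < t_m], of polynomials of
   degree at most [d] that are nonnegative at all nodes.  Such a polynomial has
   two roots near every vertex of [W] whose neighbours are not in [W], and a
   root at [t_1] or [t_m] if that end is in [W].  Hence [W] is not a face as
   soon as it contains [a] pairwise non-adjacent vertices among [2..m-1], or
   [1], [m] and [a-1] pairwise non-adjacent vertices among [3..m-2]: these are
   the generators of the right-hand ideal.  Conversely, if [W] contains no such
   configuration, simple roots on the two end runs of [W] and a pair of roots
   for every other vertex of each inner run give a polynomial of degree at most
   [d], so [W] is a face.  Both ideals are monomial, which gives the equality. *)

From Pilot Require Import Defs.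
From HB Require Import structures.
From mathcomp Require Import all_boot all_order all_algebra.
From mathcomp Require Import reals.
From mathcomp Require Import mpoly.
From mathcomp Require Import ring lra zify.
From Stdlib Require Import Classical.
Import Order.TTheory GRing.Theory Num.Theory.
Local Open Scope ring_scope.

Set Implicit Arguments.
Unset Strict Implicit.
Unset Printing Implicit Defensive.

Definition spaced (i j : nat) : bool := (i.+2 <= j)%N.

Lemma spaced_trans : transitive spaced.
Proof. by move=> y x z; rewrite /spaced => xy yz; lia. Qed.

Lemma spaced_uniq (s : seq nat) : sorted spaced s -> uniq s.
Proof.
move=> s_sp; apply: (sorted_uniq ltn_trans ltnn).
by apply: sub_sorted s_sp => x y; rewrite /spaced; lia.
Qed.

Lemma spaced_far (s : seq nat) x y : sorted spaced s -> x \in s -> y \in s ->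
  x != y -> (x.+2 <= y)%N || (y.+2 <= x)%N.
Proof.
elim: s => [//|h s IH] s_sp.
have h_min z : z \in s -> (h.+2 <= z)%N.
  exact: allP (order_path_min spaced_trans s_sp) z.
rewrite !inE => /orP [/eqP ->|xs] /orP [/eqP ->|ys]; rewrite ?eqxx //.
- by rewrite h_min.
- by rewrite h_min ?orbT.
- exact: IH (path_sorted s_sp) xs ys.
Qed.

Lemma spaced_neighbours_notin (s : seq nat) j : sorted spaced s -> j \in s ->
  (0 < j)%N -> (j.-1 \notin s) && (j.+1 \notin s).
Proof.
move=> s_sp js j0; apply/andP; split; apply/negP => h;
  by have := spaced_far s_sp h js; rewrite neq_ltn; lia.
Qed.

Lemma sorted_cat_spaced (s1 s2 : seq nat) : sorted spaced s1 -> sorted spaced s2 ->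
  (forall x y, x \in s1 -> y \in s2 -> (x.+2 <= y)%N) -> sorted spaced (s1 ++ s2).
Proof.
rewrite !(sorted_pairwise spaced_trans) pairwise_cat => -> -> s12.
by rewrite !andbT; apply/allrelP => x y xs ys; apply: s12.
Qed.

Definition aprog (b n : nat) : seq nat := [seq (b + 2 * i)%N | i <- iota 0 n].

Lemma sorted_aprog b n : sorted spaced (aprog b n).
Proof.
rewrite sorted_map; apply: sub_sorted (iota_ltn_sorted 0 n) => i j /=.
by rewrite /spaced; lia.
Qed.

Lemma size_aprog b n : size (aprog b n) = n.
Proof. by rewrite size_map size_iota. Qed.

Lemma mem_aprog b n x : x \in aprog b n -> exists2 i, (i < n)%N & x = (b + 2 * i)%N.
Proof. by case/mapP => i; rewrite mem_iota add0n => /andP [_ ilt] ->; exists i. Qed.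

(* [greedy_pick A] keeps every other element of each run of consecutive
   elements of [A], starting with the first one. *)
Fixpoint greedy_pick (A : pred nat) (j : nat) : bool :=
  if j is j'.+1 then A j && ~~ greedy_pick A j' else A 0%N.

Lemma greedy_pick_in (A : pred nat) j : greedy_pick A j -> A j.
Proof. by case: j => [//|j] /andP []. Qed.

Lemma greedy_pick_cover (A : pred nat) j :
  A j -> greedy_pick A j || (0 < j)%N && greedy_pick A j.-1.
Proof. by case: j => [|j] /= -> //=; case: (greedy_pick A j). Qed.

Lemma sorted_greedy_pick (A : pred nat) n :
  sorted spaced [seq j <- iota 0 n | greedy_pick A j].
Proof.
have := sorted_filter ltn_trans (greedy_pick A) (iota_ltn_sorted 0 n).
have := filter_all (greedy_pick A) (iota 0 n).
case: [seq j <- _ | _] => [//|x s] /= /andP [].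
elim: s x => [//|y s IH] x /= Ax /andP [Ay As] /andP [xy ys].
rewrite (IH y Ay As ys) andbT /spaced.
case: (ltngtP x.+1 y) => // [|yx]; first by lia.
by move: Ay; rewrite -yx /= Ax andbF.
Qed.

Lemma size_prod_poly_leq (R : nzSemiRingType) (I : Type) (s : seq I)
    (F : I -> {poly R}) n :
  (forall x, size (F x) <= n.+1)%N -> (size (\prod_(x <- s) F x)%R <= n * size s + 1)%N.
Proof.
move=> sizeF; elim: s => [|x s IH]; first by rewrite big_nil size_poly1 muln0.
rewrite big_cons; apply: leq_trans (size_polyMleq _ _) _.
by have := sizeF x; move: IH => /=; lia.
Qed.

Lemma exists_initial_run (P : pred nat) n : (exists2 j, (j < n)%N & ~~ P j) ->
  exists l, [/\ (l < n)%N, ~~ P l & forall j, (j < l)%N -> P j].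
Proof.
case=> j jn Pj; have ex : exists j, (j < n)%N && ~~ P j by exists j; rewrite jn.
case: (ex_minnP ex) => l /andP [ln Pl] l_min; exists l; split=> // i il.
by apply/negPn/negP => Pi; have := l_min i; rewrite Pi andbT (ltn_trans il ln) => /(_ isT); lia.
Qed.

Section DoubleRoots.
Variable R : realType.

(* A root [y] between two points where [Q] is positive has to be matched by a
   second root in between (intermediate value theorem on [Q / ('X - y)]). *)
Lemma factor_root_pair (Q : {poly R}) (x y z : R) : x < y -> y < z ->
  0 < Q.[x] -> Q.[y] = 0 -> 0 < Q.[z] ->
  exists y' Q', [/\ x < y', y' < z & Q = Q' * (('X - y%:P) * ('X - y'%:P))].
Proof.
move=> xy yz Qx Qy Qz.
have /factor_theorem [Q1 eQ1] : root Q y by apply/eqP.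
have Q1x : Q1.[x] < 0.
  have x_y : x - y < 0 by rewrite subr_lt0.
  by move: Qx; rewrite eQ1 hornerM !hornerE; nra.
have Q1z : 0 < Q1.[z].
  have z_y : 0 < z - y by rewrite subr_gt0.
  by move: Qz; rewrite eQ1 hornerM !hornerE; nra.
have [y' /andP [xy' y'z] Q1y'] : exists2 y', x <= y' <= z & root Q1 y'.
  by apply: poly_ivt; rewrite ?(ltW (lt_trans xy yz)) ?(ltW Q1x) ?(ltW Q1z).
have /factor_theorem [Q' eQ'] := Q1y'.
exists y', Q'; split.
- rewrite lt_neqAle xy' andbT; apply: contraTneq Q1y' => <-.
  by rewrite /root (lt_eqF Q1x).
- rewrite lt_neqAle y'z andbT; apply: contraTneq Q1y' => ->.
  by rewrite /root (gt_eqF Q1z).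
- by rewrite eQ1 eQ' -mulrA [_ * ('X - _)]mulrC.
Qed.

Lemma factor_root_ends (Q : {poly R}) (a b : R) : Q != 0 -> a < b ->
  Q.[a] = 0 -> Q.[b] = 0 -> exists Q' : {poly R},
    [/\ Q' != 0, size Q = (size Q').+2 & forall x, Q.[x] = Q'.[x] * ((x - a) * (b - x))].
Proof.
move=> Qn0 ab Qa Qb.
have /factor_theorem [Q1 eQ1] : root Q a by apply/eqP.
have /factor_theorem [Q2 eQ2] : root Q1 b.
  move: Qb; rewrite eQ1 hornerM hornerXsubC => /eqP.
  by rewrite mulf_eq0 subr_eq0 (gt_eqF ab) orbF.
have Q2n0 : Q2 != 0 by apply: contraNneq Qn0 => Q20; rewrite eQ1 eQ2 Q20 !mul0r.
exists (- Q2); split; first by rewrite oppr_eq0.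
  rewrite size_polyN eQ1 eQ2 -mulrA size_mul ?mulf_neq0 ?polyXsubC_eq0 //.
  by rewrite size_mul ?polyXsubC_eq0 // !size_XsubC addn3.
by move=> x; rewrite eQ1 eQ2 hornerN !hornerM !hornerXsubC; ring.
Qed.

Variables (m : nat) (T : nat -> R).
Hypothesis T_incr : forall i j, (i < j)%N -> (j < m)%N -> T i < T j.

Lemma T_le i j : (i <= j)%N -> (j < m)%N -> T i <= T j.
Proof.
by rewrite leq_eqVlt => /orP [/eqP -> //|ij jm]; apply/ltW/T_incr.
Qed.

(* Each interior zero of [Q] at a node flanked by positive values contributes
   two roots, and spaced nodes give disjoint pairs of roots. *)
Lemma size_poly_gt_double_dips (Q : {poly R}) (s : seq nat) :
  Q != 0 -> sorted spaced s ->
  (forall j, j \in s -> [/\ (0 < j)%N, (j.+1 < m)%N, Q.[T j] = 0,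
       0 < Q.[T j.-1] & 0 < Q.[T j.+1]]) ->
  (2 * size s < size Q)%N.
Proof.
elim: s Q => [|j s IH] Q Qn0 s_sp dips /=; first by rewrite size_poly_gt0.
have [j0 jm Qj Qjm Qjp] := dips j (mem_head _ _).
have j1j : (j.-1 < j)%N by rewrite ltn_predL.
have [y' [Q' [jm_y' y'_jp eQ]]] :=
  factor_root_pair (T_incr j1j (ltnW jm)) (T_incr (ltnSn j) jm) Qjm Qj Qjp.
have Q'n0 : Q' != 0 by apply: contraNneq Qn0 => Q'0; rewrite eQ Q'0 mul0r.
have sizeQ : size Q = (size Q').+2.
  rewrite eQ size_mul ?mulf_neq0 ?polyXsubC_eq0 //.
  by rewrite size_mul ?polyXsubC_eq0 // !size_XsubC addn3.
have pos p : (j < p)%N -> (p < m)%N -> 0 < (T p - T j) * (T p - y').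
  move=> jp pm; have := T_le jp pm; have := T_incr (ltnSn j) jm => h1 h2.
  by apply: mulr_gt0; rewrite subr_gt0; [exact: lt_le_trans h1 h2|exact: lt_le_trans y'_jp h2].
have QE p : Q.[T p] = Q'.[T p] * ((T p - T j) * (T p - y')).
  by rewrite eQ !hornerE.
rewrite sizeQ mulnS ltnS; apply: IH Q'n0 (path_sorted s_sp) _ => i i_s.
have ji : (j.+2 <= i)%N.
  by move/allP: (order_path_min spaced_trans s_sp) => /(_ i i_s).
have [i0 im Qi Qim Qip] := dips i (mem_behead (i_s : i \in behead (j :: s))).
have [ji' im'] : (j < i)%N /\ (i < m)%N by lia.
split=> //.
- by move: Qi; rewrite QE => /eqP; rewrite mulf_eq0 (gt_eqF (pos _ ji' im')) orbF => /eqP.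
- by move: Qim; rewrite QE pmulr_lgt0 // pos //; lia.
- by move: Qip; rewrite QE pmulr_lgt0 // pos //; lia.
Qed.

End DoubleRoots.

Section FacePolynomial.
Variables (R : realType) (d m : nat) (t : 'I_m -> R).

(* The faces are cut out by supporting hyperplanes [c . f(x) = b], i.e. by
   polynomials [b - \sum_j c_j x^(j+1)] of degree at most [d] that are
   nonnegative on the nodes. *)
Lemma face_cyc_poly (W : {set 'I_m}) : face_cyc d t W ->
  W = set0 \/ (W != setT /\ exists Q : {poly R}, [/\ (size Q <= d.+1)%N,
    forall i, 0 <= Q.[t i] & forall i, i \in W <-> Q.[t i] = 0]).
Proof.
case=> [->|[WT [c [b [c_le c_eq]]]]]; [by left|right; split=> //].
pose Q := b%:P - \sum_(j < d) c j *: 'X^(j.+1).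
have QE x : Q.[x] = b - \sum_(j < d) c j * x ^+ j.+1.
  rewrite hornerD hornerN hornerC horner_sum; congr (_ - _).
  by apply: eq_bigr => j _; rewrite hornerZ hornerXn.
exists Q; split=> [|i|i]; rewrite ?QE.
- apply: leq_trans (size_polyD _ _) _; rewrite size_polyN geq_max.
  rewrite (leq_trans (size_polyC_leq1 _)) //=.
  apply: leq_trans (size_sum _ _ _) _; apply/bigmax_leqP => j _.
  by apply: leq_trans (size_scale_leq _ _) _; rewrite size_polyXn ltnS.
- by rewrite subr_ge0.
- by rewrite c_eq; split=> [->|/eqP]; [rewrite subrr|rewrite subr_eq0 => /eqP ->].
Qed.

Lemma poly_face_cyc (W : {set 'I_m}) (Q : {poly R}) : W != setT ->
  (size Q <= d.+1)%N -> (forall i, 0 <= Q.[t i]) ->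
  (forall i, i \in W <-> Q.[t i] = 0) -> face_cyc d t W.
Proof.
move=> WT sizeQ Q_ge0 Q_eq0; right; split=> //.
exists (fun j : 'I_d => - Q`_j.+1), Q`_0.
have sumE x : \sum_(j < d) - Q`_j.+1 * x ^+ j.+1 = Q`_0 - Q.[x].
  rewrite (horner_coef_wide _ sizeQ) big_ord_recl expr0 mulr1.
  rewrite opprD addrA subrr add0r -sumrN.
  by apply: eq_bigr => j _; rewrite mulNr.
split=> i; rewrite sumE; first by rewrite lerBlDr lerDl.
rewrite Q_eq0; split=> [->|/eqP]; first by rewrite subr0.
by rewrite subr_eq addrC -subr_eq subrr eq_sym => /eqP.
Qed.

End FacePolynomial.

Section GeneratedIdeal.
Variables (k : fieldType) (m : nat).
Implicit Types (G : {mpoly k[m]} -> Prop) (g h : {mpoly k[m]}).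

Lemma in_gen_ideal_gen G g : G g -> in_gen_ideal G g.
Proof.
move=> Gg; exists [:: (1, g)]; split; last by rewrite big_seq1 mul1r.
by move=> x; rewrite inE => /eqP ->.
Qed.

Lemma in_gen_idealMl G g h : in_gen_ideal G g -> in_gen_ideal G (h * g).
Proof.
case=> l [Gl ->]; exists [seq (h * x.1, x.2) | x <- l]; split.
  by move=> y /mapP [x xl ->]; exact: Gl xl.
by rewrite big_map mulr_sumr; apply: eq_bigr => x _; rewrite mulrA.
Qed.

Lemma in_gen_idealD G g h :
  in_gen_ideal G g -> in_gen_ideal G h -> in_gen_ideal G (g + h).
Proof.
case=> l [Gl ->] [l' [Gl' ->]]; exists (l ++ l'); split; last by rewrite big_cat.
by move=> x; rewrite mem_cat => /orP [/Gl|/Gl'].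
Qed.

Lemma in_gen_ideal_sub G G' g : (forall h, G h -> in_gen_ideal G' h) ->
  in_gen_ideal G g -> in_gen_ideal G' g.
Proof.
move=> GG' [l [Gl ->]]; elim: l Gl => [|x l IH] Gl.
  by exists [::]; rewrite big_nil.
rewrite big_cons; apply: in_gen_idealD; first by apply/in_gen_idealMl/GG'/Gl/mem_head.
by apply: IH => y yl; apply: Gl; rewrite inE yl orbT.
Qed.

(* [Defs.monoW] is qualified throughout because ssrbool also has a [monoW]. *)
Lemma monoW_subset (S W : {set 'I_m}) : S \subset W ->
  Defs.monoW k W = Defs.monoW k (W :\: S) * Defs.monoW k S.
Proof.
move=> SW; rewrite /Defs.monoW (bigID (mem S)) /= mulrC; congr (_ * _).
  by apply: eq_bigl => i; rewrite !inE andbC.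
by apply: eq_bigl => i; case iS: (i \in S); rewrite ?andbF // (subsetP SW i iS).
Qed.

Lemma xv_ord (i : 'I_m) : xv k m (val i).+1 = 'X_i.
Proof. by rewrite /xv ltn_ord /= (big_pred1 i). Qed.

Lemma prod_xv (s : seq nat) : uniq s -> (forall x, x \in s -> (0 < x <= m)%N) ->
  \prod_(x <- s) xv k m x = Defs.monoW k [set i : 'I_m | (val i).+1 \in s].
Proof.
elim: s => [|x s IH] /= s_uniq s_range.
  have -> : [set i : 'I_m | (val i).+1 \in [::]] = set0 by apply/setP => i; rewrite !inE.
  by rewrite big_nil /Defs.monoW big_set0.
case/andP: s_uniq => xs s_uniq.
have /andP [x0 xm] := s_range x (mem_head _ _).
have xm' : (x.-1 < m)%N by lia.
pose i0 := Ordinal xm'.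
have ex : x = (val i0).+1 by rewrite /= prednK.
rewrite big_cons IH //; last by move=> y ys; apply: s_range; rewrite inE ys orbT.
have -> : [set i : 'I_m | (val i).+1 \in x :: s] =
          i0 |: [set i : 'I_m | (val i).+1 \in s].
  by apply/setP => i; rewrite !inE ex eqSS val_eqE.
by rewrite /Defs.monoW big_setU1 /= ?inE -?ex // ex xv_ord.
Qed.

End GeneratedIdeal.

Section Nodes.
Variables (R : realType) (m : nat) (t : 'I_m -> R).
Hypothesis t_incr : forall i j : 'I_m, (i < j)%N -> t i < t j.

(* 0-based natural-number views of the nodes and of a vertex set; indices
   [j >= m] get the junk values [0] and [false]. *)
Definition tn (j : nat) : R := if insub j is Some i then t i else 0.
Definition inW (W : {set 'I_m}) (j : nat) : bool :=
  if insub j is Some i then i \in W else false.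

Lemma tn_val (i : 'I_m) : tn (val i) = t i.
Proof. by rewrite /tn valK. Qed.

Lemma inW_val W (i : 'I_m) : inW W (val i) = (i \in W).
Proof. by rewrite /inW valK. Qed.

Lemma inW_lt W j : inW W j -> (j < m)%N.
Proof. by rewrite /inW; case: insubP => //= i _ <- _; exact: ltn_ord. Qed.

Lemma inW_set (P : pred nat) j :
  inW [set i : 'I_m | P (val i)] j = (j < m)%N && P j.
Proof. by rewrite /inW; case: insubP => [i -> <-|/negbTE ->]; rewrite ?inE. Qed.

Lemma inW_setT j : inW setT j = (j < m)%N.
Proof. by rewrite /inW; case: insubP => [i -> _|/negbTE ->]; rewrite ?inE. Qed.

Definition interior (W : {set 'I_m}) (e : nat) : pred nat :=
  [pred x | [&& (e < x)%N, (x + e + 2 <= m)%N & inW W x]].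

Lemma tn_incr i j : (i < j)%N -> (j < m)%N -> tn i < tn j.
Proof.
move=> ij jm; have im := ltn_trans ij jm.
by rewrite -[i]/(val (Ordinal im)) -[j]/(val (Ordinal jm)) !tn_val t_incr.
Qed.

Lemma face_cyc_node_poly d W : face_cyc d t W -> W != set0 ->
  exists2 Q : {poly R}, Q != 0 /\ (size Q <= d.+1)%N &
    forall j, (j < m)%N -> if inW W j then Q.[tn j] = 0 else 0 < Q.[tn j].
Proof.
case/face_cyc_poly => [-> /eqP //|[WT [Q [sizeQ Q_ge0 Q_eq0]]] _].
exists Q.
  split=> //; rewrite -properT in WT; case/properP: WT => _ [i _ iW].
  by apply: contraNneq iW => Q0; apply/Q_eq0; rewrite Q0 horner0.
move=> j jm; rewrite -[j]/(val (Ordinal jm)) inW_val tn_val.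
case: ifP => [/Q_eq0 //|iW]; rewrite lt_neqAle Q_ge0 andbT.
by apply: contraFneq iW => /esym /Q_eq0.
Qed.

Lemma nonface_spaced d (s : seq nat) : sorted spaced s -> d.+1 = (2 * size s)%N ->
  (forall j, j \in s -> (0 < j)%N && (j.+2 <= m)%N) ->
  ~ face_cyc d t [set i : 'I_m | val i \in s].
Proof.
move=> s_sp ds s_in F.
have [j0 s_j0] : exists j0, j0 \in s.
  by case: s ds {s_sp s_in F} => // j0 s; exists j0; rewrite mem_head.
have j0m : (j0 < m)%N by have := s_in j0 s_j0; lia.
have [|Q [Qn0 sizeQ] QW] := face_cyc_node_poly F.
  by apply/set0Pn; exists (Ordinal j0m); rewrite inE.
have {}QW j : (j < m)%N -> if j \in s then Q.[tn j] = 0 else 0 < Q.[tn j].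
  by move=> jm; have := QW j jm; rewrite inW_set jm.
suff : (2 * size s < size Q)%N by lia.
apply: (size_poly_gt_double_dips tn_incr Qn0 s_sp) => j js.
have /andP [j0' jm] := s_in j js.
have /andP [jl jr] := spaced_neighbours_notin s_sp js j0'.
have := QW j.-1; have := QW j; have := QW j.+1.
rewrite js (negbTE jl) (negbTE jr) => Qjp Qj Qjm.
by split=> //; [apply: Qj | apply: Qjm | apply: Qjp]; lia.
Qed.

Lemma nonface_spaced_ends d (s : seq nat) : sorted spaced s ->
  d.+1 = (2 * size s + 2)%N -> (2 < m)%N ->
  (forall j, j \in s -> (1 < j)%N && (j.+3 <= m)%N) ->
  ~ face_cyc d t [set i : 'I_m | [|| val i == 0%N, val i == m.-1 | val i \in s]].
Proof.
move=> s_sp ds m2 s_in F.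
have [|Q [Qn0 sizeQ] QW] := face_cyc_node_poly F.
  by apply/set0Pn; exists (Ordinal (ltn_trans (isT : 0 < 2)%N m2)); rewrite inE.
have {}QW j : (j < m)%N ->
    if [|| j == 0%N, j == m.-1 | j \in s] then Q.[tn j] = 0 else 0 < Q.[tn j].
  move=> jm; have := QW j jm.
  by rewrite (inW_set (fun j => [|| j == 0%N, j == m.-1 | j \in s])) jm.
have [m1 m0] : (0 < m.-1)%N /\ (m.-1 < m)%N by lia.
have Qt0 : Q.[tn 0] = 0 by have := QW 0%N (ltn_trans m1 m0).
have Qtm : Q.[tn m.-1] = 0 by have := QW m.-1 m0; rewrite eqxx orbT.
have [Q' [Q'n0 sizeQ' QE]] := factor_root_ends Qn0 (tn_incr m1 m0) Qt0 Qtm.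
have {}QW p : (0 < p)%N -> (p < m.-1)%N ->
    if p \in s then Q'.[tn p] = 0 else 0 < Q'.[tn p].
  move=> p0 pm; have w_gt0 : 0 < (tn p - tn 0) * (tn m.-1 - tn p).
    by rewrite mulr_gt0 // subr_gt0 tn_incr //; lia.
  have [/negbTE p0F /negbTE pmF] : p != 0%N /\ p != m.-1 by split; apply/eqP; lia.
  have := QW p (ltn_trans pm m0); rewrite p0F pmF QE /=.
  case: (p \in s); last by rewrite pmulr_lgt0.
  by move/eqP; rewrite mulf_eq0 (gt_eqF w_gt0) orbF => /eqP.
suff : (2 * size s < size Q')%N by lia.
apply: (size_poly_gt_double_dips tn_incr Q'n0 s_sp) => j js.
have /andP [j1 jm] := s_in j js.
have /andP [jl jr] := spaced_neighbours_notin s_sp js (ltnW j1).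
have := QW j.-1; have := QW j; have := QW j.+1.
rewrite js (negbTE jl) (negbTE jr) => Qjp Qj Qjm.
by split; [lia | lia | apply: Qj | apply: Qjm | apply: Qjp]; lia.
Qed.

Section SupportingPolynomial.
Variables (W : {set 'I_m}) (l r : nat).
Hypotheses (lm : (l < m)%N) (rm : (r < m)%N) (lr : (l <= m.-1 - r)%N)
  (W_init : forall j, (j < l)%N -> inW W j) (W_l : ~~ inW W l)
  (W_final : forall j, (j < r)%N -> inW W (m.-1 - j)) (W_r : ~~ inW W (m.-1 - r)).

Definition inner j := [&& inW W j, (l < j)%N & (j < m.-1 - r)%N].
Definition picked := [seq j <- iota 0 m | greedy_pick inner j].
Definition partner p := if inner p.+1 then tn p.+1 else tn p.

(* Simple roots at the two end runs, signed to be positive in between, and a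
   pair of roots at [t_p, t_(p+1)] for each picked [p]; no node lies strictly
   between the two roots of a pair, and every inner vertex is a picked [p] or
   its successor. *)
Definition supp_poly : {poly R} :=
  \prod_(j <- iota 0 l) ('X - (tn j)%:P) *
  \prod_(j <- iota 0 r) ((tn (m.-1 - j))%:P - 'X) *
  \prod_(p <- picked) (('X - (tn p)%:P) * ('X - (partner p)%:P)).

Lemma picked_inner x : x \in picked -> [&& (l < x)%N, (x < m.-1 - r)%N & inW W x].
Proof. by rewrite mem_filter => /andP [/greedy_pick_in /and3P [-> -> ->]]. Qed.

Lemma size_supp_poly : (size supp_poly <= l + r + 2 * size picked + 1)%N.
Proof.
rewrite /supp_poly; set P1 := \prod_(j <- _) _; set P2 := \prod_(j <- _) _.
set P3 := \prod_(p <- _) _.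
have s1 : (size P1 <= l + 1)%N by rewrite size_prod_XsubC size_iota addn1.
have s2 : (size P2 <= r + 1)%N.
  have := @size_prod_poly_leq _ _ (iota 0 r) (fun j => (tn (m.-1 - j))%:P - 'X) 1.
  by rewrite size_iota mul1n; apply=> j; rewrite -opprB size_polyN size_XsubC.
have s3 : (size P3 <= 2 * size picked + 1)%N.
  apply: size_prod_poly_leq => p.
  by apply: leq_trans (size_polyMleq _ _) _; rewrite !size_XsubC.
have s12 : (size (P1 * P2)%R <= l + r + 1)%N.
  apply: leq_trans (size_polyMleq _ _) _; rewrite -subn1 leq_subLR.
  by apply: leq_trans (leq_add s1 s2) _; lia.
apply: leq_trans (size_polyMleq _ _) _; rewrite -subn1 leq_subLR.
by apply: leq_trans (leq_add s12 s3) _; lia.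
Qed.

Lemma supp_polyE x : supp_poly.[x] =
  \prod_(j <- iota 0 l) (x - tn j) * \prod_(j <- iota 0 r) (tn (m.-1 - j) - x) *
  \prod_(p <- picked) ((x - tn p) * (x - partner p)).
Proof.
rewrite /supp_poly !hornerM !horner_prod; congr (_ * _ * _); apply: eq_bigr => j _.
- by rewrite hornerXsubC.
- by rewrite hornerD hornerN hornerX hornerC.
- by rewrite hornerM !hornerXsubC.
Qed.

Lemma supp_poly_root j : inW W j -> supp_poly.[tn j] = 0.
Proof.
move=> Wj; have jm := inW_lt Wj.
rewrite supp_polyE; apply/eqP; rewrite !mulf_eq0 !prodf_seq_eq0.
have [jl|lj] := ltnP j l.
  apply/orP; left; apply/orP; left; apply/hasP; exists j; rewrite ?mem_iota //=.
  by rewrite subrr eqxx.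
have [rj|jr] := ltnP (m.-1 - r) j.
  apply/orP; left; apply/orP; right; apply/hasP; exists (m.-1 - j)%N.
    by rewrite mem_iota; lia.
  by rewrite /= (_ : m.-1 - (m.-1 - j) = j)%N ?subrr //; lia.
have lj' : l != j by apply: contraNneq W_l => ->.
have jr' : j != (m.-1 - r)%N by apply: contraNneq W_r => <-.
have inner_j : inner j by rewrite /inner Wj; lia.
apply/orP; right; apply/hasP.
case/orP: (greedy_pick_cover inner_j) => [pj|/andP [j0 pj]].
  by exists j; rewrite ?mem_filter ?pj ?mem_iota //= subrr mul0r.
exists j.-1; first by rewrite mem_filter pj mem_iota; lia.
by rewrite /= /partner prednK // inner_j subrr mulr0.
Qed.

Lemma supp_poly_pos j : (j < m)%N -> ~~ inW W j -> 0 < supp_poly.[tn j].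
Proof.
move=> jm Wj.
have lj : (l <= j)%N by rewrite leqNgt; apply: contra Wj => /W_init.
have jr : (j <= m.-1 - r)%N.
  rewrite leqNgt; apply: contra Wj => rj.
  by rewrite (_ : j = m.-1 - (m.-1 - j))%N; [apply: W_final|]; lia.
have inner_j : ~~ inner j by rewrite /inner (negbTE Wj).
rewrite supp_polyE; apply: mulr_gt0; first apply: mulr_gt0; rewrite big_seq.
- apply: prodr_gt0 => p; rewrite mem_iota => /andP [_ pl].
  by rewrite subr_gt0 tn_incr //; lia.
- apply: prodr_gt0 => p; rewrite mem_iota => /andP [_ pr].
  by rewrite subr_gt0 tn_incr //; lia.
apply: prodr_gt0 => p; rewrite mem_filter mem_iota add0n => /andP [pp /andP [_ pm]].
have inner_p := greedy_pick_in pp.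
have pj : p != j by apply: contraNneq inner_j => <-.
rewrite /partner; case: (ltngtP j p) pj => // [jp|pj] _.
- have tp_le : tn p <= (if inner p.+1 then tn p.+1 else tn p).
    by case: ifP => // /and3P [/inW_lt pm1 _ _]; apply/ltW/tn_incr.
  have tj_tp := tn_incr jp pm.
  rewrite -mulrNN; apply: mulr_gt0; rewrite oppr_gt0 subr_lt0 //.
  exact: lt_le_trans tj_tp tp_le.
- case: ifP => inner_p1; last by apply: mulr_gt0; rewrite subr_gt0 tn_incr.
  have p1j : (p.+1 < j)%N.
    by rewrite ltn_neqAle pj andbT; apply: contraNneq inner_j => <-.
  by apply: mulr_gt0; rewrite subr_gt0 tn_incr //; lia.
Qed.

Lemma spaced_chain e : (e <= 1)%N -> (e <= l)%N -> (e <= r)%N ->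
  exists2 L, sorted spaced L /\ {subset L <= interior W e} &
    size L = ((l - e) %/ 2 + size picked + (r - e) %/ 2)%N.
Proof.
move=> e1 el er; set p := ((l - e) %/ 2)%N; set q := ((r - e) %/ 2)%N.
exists (aprog e.+1 p ++ picked ++ aprog (m - e - 2 * q) q); last first.
  by rewrite !size_cat !size_aprog addnA.
split.
- apply: sorted_cat_spaced; [exact: sorted_aprog| |].
  + apply: sorted_cat_spaced; [exact: sorted_greedy_pick|exact: sorted_aprog|].
    by move=> x y /picked_inner /and3P [lx xr _] /mem_aprog [i iq ->]; lia.
  + move=> x y /mem_aprog [i ip ->]; rewrite mem_cat.
    by case/orP=> [/picked_inner /and3P [ly yr _]|/mem_aprog [j jq ->]]; lia.
- move=> x; rewrite !mem_cat => /or3P [].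
  + by case/mem_aprog=> i ip ->; rewrite inE W_init; lia.
  + by case/picked_inner/and3P=> lx xr Wx; rewrite inE Wx; lia.
  + case/mem_aprog=> i iq ->; rewrite inE; set y := (m - e - 2 * q + 2 * i)%N.
    by rewrite (_ : y = m.-1 - (m.-1 - y))%N ?W_final; lia.
Qed.

Lemma size_supp_poly_lt (a : nat) :
  (forall L, sorted spaced L -> {subset L <= interior W 0} -> (size L < a)%N) ->
  (inW W 0 -> inW W m.-1 -> forall L, sorted spaced L ->
     {subset L <= interior W 1} -> (size L < a.-1)%N) ->
  (l + r + 2 * size picked < 2 * a)%N.
Proof.
move=> short0 short1.
have [L0 [L0_sp L0_in] sizeL0] := spaced_chain (isT : 0 <= 1)%N (leq0n l) (leq0n r).
have := short0 _ L0_sp L0_in; rewrite sizeL0 !subn0 => lt0.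
have [l0|l_gt0] := posnP l; first by lia.
have [r0|r_gt0] := posnP r; first by lia.
have [L1 [L1_sp L1_in] sizeL1] := spaced_chain (isT : 1 <= 1)%N l_gt0 r_gt0.
have Wm : inW W m.-1 by have := W_final r_gt0; rewrite subn0.
by have := short1 (W_init l_gt0) Wm _ L1_sp L1_in; rewrite sizeL1; lia.
Qed.

End SupportingPolynomial.

Lemma face_cyc_of_short d a W : (2 * a = d.+1)%N -> (d.+2 <= m)%N ->
  (forall L, sorted spaced L -> {subset L <= interior W 0} -> (size L < a)%N) ->
  (inW W 0 -> inW W m.-1 -> forall L, sorted spaced L ->
     {subset L <= interior W 1} -> (size L < a.-1)%N) ->
  face_cyc d t W.
Proof.
move=> da dm short0 short1.
have WT : W != setT.
  apply/eqP => WT; suff : (a < a)%N by rewrite ltnn.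
  rewrite -{1}(size_aprog 1 a); apply: short0 (sorted_aprog 1 a) _ => _ /mem_aprog [i ia ->].
  by rewrite inE WT inW_setT; lia.
have /properP [_ [i0 _ i0W]] : W \proper setT by rewrite properT.
have [l [lm W_l W_init]] : exists l, [/\ (l < m)%N, ~~ inW W l &
    forall j, (j < l)%N -> inW W j].
  by apply: exists_initial_run; exists (val i0); rewrite ?ltn_ord ?inW_val.
have [r [rm W_r W_final]] : exists r, [/\ (r < m)%N, ~~ inW W (m.-1 - r) &
    forall j, (j < r)%N -> inW W (m.-1 - j)].
  apply: (exists_initial_run (P := fun j => inW W (m.-1 - j))).
  have i0m : (val i0 <= m.-1)%N by rewrite -ltnS prednK ?ltn_ord // (leq_ltn_trans _ (ltn_ord i0)).
  by exists (m.-1 - val i0)%N; rewrite ?subKn ?inW_val //; lia.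
have lr : (l <= m.-1 - r)%N by rewrite leqNgt; apply: contra W_r => /W_init.
have Q_root := supp_poly_root lm rm lr W_l W_r.
have Q_pos := supp_poly_pos lm rm lr W_init W_l W_final W_r.
apply: (poly_face_cyc (Q := supp_poly W l r)) => // [|i|i]; rewrite -?tn_val.
- have := size_supp_poly_lt lm rm lr W_init W_l W_final W_r short0 short1.
  by have := size_supp_poly lm rm lr W_l W_r; lia.
- case Wi: (i \in W); first by rewrite Q_root ?inW_val.
  by apply/ltW/Q_pos; rewrite ?ltn_ord ?inW_val ?Wi.
- case Wi: (i \in W); first by rewrite Q_root ?inW_val.
  by split=> // /eqP; rewrite gt_eqF // Q_pos ?ltn_ord ?inW_val ?Wi.
Qed.

End Nodes.

Lemma sorted_spaced_succ (s : seq nat) : sorted spaced s -> sorted spaced (map succn s).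
Proof. by rewrite sorted_map; apply: sub_sorted. Qed.

Lemma sorted_spaced_pred (s : seq nat) : sorted spaced s ->
  (forall x, x \in s -> (0 < x)%N) -> sorted spaced (map predn s).
Proof.
move=> s_sp s_gt0; apply: (homo_sorted_in (P := fun x => (0 < x)%N)) s_sp.
  by move=> x y x0 y0; rewrite /spaced; lia.
by apply/allP => x /s_gt0.
Qed.

Lemma mem_map_predn (s : seq nat) x : (forall y, y \in s -> (0 < y)%N) ->
  (x \in map predn s) = (x.+1 \in s).
Proof.
move=> s_gt0; apply/mapP/idP => [[y ys ->]|xs]; last by exists x.+1.
by rewrite prednK ?s_gt0.
Qed.

Section StanleyReisnerIdeal.
Variables (k : fieldType) (R : realType) (m : nat) (t : 'I_m -> R).
Hypothesis t_incr : forall i j : 'I_m, (i < j)%N -> t i < t j.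
Variables (d a : nat).
Hypotheses (da : (2 * a = d.+1)%N) (dm : (d.+2 <= m)%N).

Lemma Iapq_genP b p q (g : {mpoly k[m]}) : Iapq_gen b p q g <->
  exists s : seq nat, [/\ size s = b, sorted spaced s,
    forall x, x \in s -> (p <= x <= q)%N & g = \prod_(x <- s) xv k m x].
Proof.
split=> [[s [size_s s_in s_sp ->]]|[s [size_s s_sp s_in ->]]]; exists s; split=> //.
- apply/(sortedP 0%N) => i; rewrite size_s /spaced => /s_sp; lia.
- by move=> x /(nthP 0%N) [i]; rewrite size_s => /s_in + <-.
- by move=> j ja; apply/s_in/mem_nth; rewrite size_s.
- by move=> j ja; move/(sortedP 0%N): s_sp => /(_ j); rewrite size_s /spaced => /(_ ja); lia.
Qed.

Lemma J_gen_SR_gen g : @J_gen k m a g -> @SR_gen k R d m t g.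
Proof.
case=> [/Iapq_genP [s [size_s s_sp s_in ->]]|[h [/Iapq_genP [s [size_s s_sp s_in ->]] ->]]].
- have s_gt0 x : x \in s -> (0 < x)%N by move/s_in; lia.
  exists [set i : 'I_m | (val i).+1 \in s]; split.
    have -> : [set i : 'I_m | (val i).+1 \in s] = [set i : 'I_m | val i \in map predn s].
      by apply/setP => i; rewrite !inE mem_map_predn.
    apply: (nonface_spaced t_incr (sorted_spaced_pred s_sp s_gt0)).
      by rewrite size_map size_s.
    by move=> j; rewrite mem_map_predn // => /s_in; lia.
  by rewrite prod_xv ?spaced_uniq // => x /s_in; lia.
- have s_gt0 x : x \in s -> (0 < x)%N by move/s_in; lia.
  exists [set i : 'I_m | (val i).+1 \in [:: 1, m & s]%N]; split.
    have -> : [set i : 'I_m | (val i).+1 \in [:: 1, m & s]%N] = [set i : 'I_m |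
        [|| val i == 0%N, val i == m.-1 | val i \in map predn s]].
      apply/setP => i; rewrite !inE mem_map_predn // eqSS.
      by congr [|| _, _ | _]; apply/eqP/eqP; lia.
    apply: (nonface_spaced_ends t_incr (sorted_spaced_pred s_sp s_gt0)).
    - by rewrite size_map size_s; lia.
    - by lia.
    - by move=> j; rewrite mem_map_predn // => /s_in; lia.
  rewrite -prod_xv /=; first by rewrite !big_cons mulrA.
    rewrite /= !inE spaced_uniq // andbT negb_or -andbA; apply/and3P; split.
    - by apply/eqP; lia.
    - by apply/negP => /s_in; lia.
    - by apply/negP => /s_in; lia.
  by move=> x; rewrite !inE => /or3P [/eqP ->|/eqP ->|/s_in]; lia.
Qed.

Lemma spaced_interior_in_J W L : sorted spaced L -> {subset L <= interior W 0} ->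
  (a <= size L)%N -> in_gen_ideal (@J_gen k m a) (Defs.monoW k W).
Proof.
move=> L_sp L_in aL; set s := map succn (take a L).
have s_in x : x \in s -> [&& 1 < x, x <= m.-1 & inW W x.-1]%N.
  by case/mapP=> y /mem_take /L_in; rewrite inE => /and3P [y0 ym Wy] ->; rewrite succnK Wy; lia.
have SW : [set i : 'I_m | (val i).+1 \in s] \subset W.
  by apply/subsetP => i; rewrite inE => /s_in /and3P [_ _]; rewrite inW_val.
rewrite (monoW_subset k SW) -prod_xv; last by move=> x /s_in; lia.
  apply/in_gen_idealMl/in_gen_ideal_gen; left; apply/Iapq_genP; exists s; split=> //.
  - by rewrite size_map size_takel.
  - exact/sorted_spaced_succ/take_sorted.
  - by move=> x /s_in; lia.
exact/spaced_uniq/sorted_spaced_succ/take_sorted.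
Qed.

Lemma spaced_ends_interior_in_J W L : inW W 0 -> inW W m.-1 ->
  sorted spaced L -> {subset L <= interior W 1} ->
  (a.-1 <= size L)%N -> in_gen_ideal (@J_gen k m a) (Defs.monoW k W).
Proof.
move=> W0 Wm L_sp L_in aL; set s := map succn (take a.-1 L).
have s_in x : x \in s -> [&& 2 < x, x <= m - 2 & inW W x.-1]%N.
  by case/mapP=> y /mem_take /L_in; rewrite inE => /and3P [y0 ym Wy] ->; rewrite succnK Wy; lia.
have s_sp : sorted spaced s by exact/sorted_spaced_succ/take_sorted.
have SW : [set i : 'I_m | (val i).+1 \in [:: 1, m & s]%N] \subset W.
  apply/subsetP => i; rewrite !inE -!inW_val.
  case/or3P=> [/eqP [i0]|/eqP mi|/s_in /and3P [_ _]]; last by rewrite succnK.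
  - by rewrite (_ : val i = 0%N).
  - by rewrite (congr1 predn mi : val i = m.-1).
rewrite (monoW_subset k SW) -prod_xv.
- apply/in_gen_idealMl/in_gen_ideal_gen; right; exists (\prod_(x <- s) xv k m x).
  split; last by rewrite !big_cons mulrA.
  apply/Iapq_genP; exists s; split=> //; last by move=> x /s_in; lia.
  by rewrite size_map size_takel.
- rewrite /= !inE spaced_uniq // andbT negb_or -andbA; apply/and3P; split.
  + by apply/eqP; lia.
  + by apply/negP => /s_in; lia.
  + by apply/negP => /s_in; lia.
- by move=> x; rewrite !inE => /or3P [/eqP ->|/eqP ->|/s_in]; lia.
Qed.

Lemma monoW_nonface_in_J W : ~ face_cyc d t W ->
  in_gen_ideal (@J_gen k m a) (Defs.monoW k W).
Proof.
move=> W_nonface.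
have [[L [L_sp L_in aL]]|no_chain0] := classic (exists L,
  [/\ sorted spaced L, {subset L <= interior W 0} & (a <= size L)%N]).
  exact: spaced_interior_in_J L_sp L_in aL.
have [[W0 [Wm [L [L_sp L_in aL]]]]|no_chain1] := classic (inW W 0 /\ inW W m.-1 /\
  exists L, [/\ sorted spaced L, {subset L <= interior W 1} & (a.-1 <= size L)%N]).
  exact: spaced_ends_interior_in_J W0 Wm L_sp L_in aL.
case: W_nonface; apply: (face_cyc_of_short t_incr da dm).
- move=> L L_sp L_in; rewrite ltnNge; apply/negP => aL.
  by apply: no_chain0; exists L.
- move=> W0 Wm L L_sp L_in; rewrite ltnNge; apply/negP => aL.
  by apply: no_chain1; do 2!split=> //; exists L.
Qed.

End StanleyReisnerIdeal.

Unset Implicit Arguments.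

Theorem proposition4p1 (k : fieldType) (R : realType) (d m : nat)
  (t : 'I_m -> R) :
  odd d -> (5 <= d)%N -> (d < m.-1)%N ->
  (forall i j : 'I_m, (i < j)%N -> t i < t j) ->
  forall p : {mpoly k[m]},
    in_gen_ideal (@SR_gen k R d m t) p <-> in_gen_ideal (@J_gen k m d.+1./2) p.
Proof.
(* The argument only uses that [d] is odd, not that [d >= 5]. *)
move=> d_odd _ dm t_incr p.
have da : (2 * d.+1./2 = d.+1)%N by rewrite -[in RHS](odd_double_half d.+1) /= d_odd -mul2n.
have dm' : (d.+2 <= m)%N by lia.
split; apply: in_gen_ideal_sub => g.
- by case=> W [W_nonface ->]; apply: monoW_nonface_in_J W_nonface.
- by move/(J_gen_SR_gen t_incr da dm'); apply: in_gen_ideal_gen.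
Qed.
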